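(* Let $K>3$, $V\ge1$, let $\phi_1,\dots,\phi_K\in\Delta_{V-1}$ have strictly positive entries, $p\in\Delta_{V-1}$, and $H(\theta)=\sum_{v=1}^Vp_v\log\big(\sum_{k=1}^K\theta_k\phi_k(v)\big)$. Let $\theta^*$ be a maximizer of $H$ on $\Delta_{K-1}$ with all coordinates strictly positive. Assume (B1): for every $v$, $\max_k\phi_k(v)$ is attained at a unique index $k(v)$; and that $\phi$ is $\varepsilon$-sparse with $\varepsilon<\varepsilon_0$. Then $$\rho^2:=\frac{|\det Q|^{1/2}|\det R|^{1/2}}{\left|\det\!\left(\frac{Q+R}{2}\right)\right|}\ \ge\ \exp(-C^2\varepsilon^2),$$ where $Q=\nabla^2H(\theta^* )$, $R=-\mathrm{diag}(1/\theta^*_1,\dots,1/\theta^*_K)$, and $C>0$ is a constant depending only on $\theta^*$, $K$ and $\varepsilon_0$.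
   Context: $\Delta_{d-1}=\{x\in\mathbb{R}^d:x_i\ge0,\sum_ix_i=1\}$. $\phi$ is $\varepsilon$-sparse if $\varepsilon=\max_v\frac{\sum_{j\ne k(v)}\phi_j(v)}{\phi_{k(v)}(v)}$. Let $\theta^*_{\min}=\min_k\theta^*_k$, $\theta^*_{\max}=\max_k\theta^*_k$, $C^{(1)}_{\max}=(\theta^*_{\max})^{1/2}/(\theta^*_{\min})^{3/2}$, $C^{(2)}_{\max}=\theta^*_{\max}/(\theta^*_{\min})^2$, and $F(\varepsilon)=4(C^{(2)}_{\max})^2K+K(K-1)\big(2C^{(1)}_{\max}+C^{(2)}_{\max}\varepsilon\big)^2$. The function $\varepsilon\mapsto\varepsilon\sqrt{F(\varepsilon)}$ is strictly increasing on $(0,\infty)$ and vanishes at $0$; $\varepsilon_0>0$ is the unique root of $\varepsilon\sqrt{F(\varepsilon)}=1/2$. *)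

From HB Require Import structures.
From mathcomp Require Import all_boot all_order all_algebra.
From mathcomp Require Import all_classical all_reals all_analysis.
Set Implicit Arguments. Unset Strict Implicit. Unset Printing Implicit Defensive.
Import Order.TTheory GRing.Theory Num.Theory.
Import numFieldNormedType.Exports.
Local Open Scope ring_scope.

Section Defs.
Variable R : realType.

Definition in_simplex (n : nat) (x : 'I_n -> R) : Prop :=
  (forall i, 0 <= x i) /\ \sum_(i < n) x i = 1.

Definition Hfun (K V : nat) (p : 'I_V -> R) (phi : 'I_K -> 'I_V -> R)
  (theta : 'I_K -> R) : R :=
  \sum_(v < V) p v * ln (\sum_(k < K) theta k * phi k v).

Definition shift2 (K : nat) (theta : 'I_K -> R) (i j : 'I_K) (s t : R) :
  'I_K -> R :=
  fun k => theta k + s * (k == i)%:R + t * (k == j)%:R.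

Definition hessH (K V : nat) (p : 'I_V -> R) (phi : 'I_K -> 'I_V -> R)
  (theta : 'I_K -> R) : 'M[R]_K :=
  \matrix_(i, j)
    derive1 (fun t => derive1 (fun s => Hfun p phi (shift2 theta i j s t)) 0) 0.

Definition Rmat (K : nat) (theta : 'I_K -> R) : 'M[R]_K :=
  \matrix_(i, j) (if i == j then - (theta i)^-1 else 0).

Definition rho2 (K : nat) (Q Rm : 'M[R]_K) : R :=
  Num.sqrt `|\det Q| * Num.sqrt `|\det Rm| / `|\det ((2%:R)^-1 *: (Q + Rm))|.

(* theta_min, theta_max (for theta in the simplex, every theta_k <= 1 and
   theta_k > 0, so the neutral elements 1 resp. 0 do not affect the value) *)
Definition theta_min (K : nat) (theta : 'I_K -> R) : R :=
  \big[Num.min/1]_(k < K) theta k.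
Definition theta_max (K : nat) (theta : 'I_K -> R) : R :=
  \big[Num.max/0]_(k < K) theta k.

Definition C1max (K : nat) (theta : 'I_K -> R) : R :=
  Num.sqrt (theta_max theta) / (theta_min theta * Num.sqrt (theta_min theta)).
Definition C2max (K : nat) (theta : 'I_K -> R) : R :=
  theta_max theta / (theta_min theta ^+ 2).

Definition Ffun (K : nat) (theta : 'I_K -> R) (eps : R) : R :=
  4%:R * (C2max theta) ^+ 2 * K%:R
  + K%:R * (K%:R - 1) * (2%:R * C1max theta + C2max theta * eps) ^+ 2.

Definition B1 (K V : nat) (phi : 'I_K -> 'I_V -> R) (kv : 'I_V -> 'I_K) : Prop :=
  forall v j, j != kv v -> phi j v < phi (kv v) v.

Definition sparsity (K V : nat) (phi : 'I_K -> 'I_V -> R) (kv : 'I_V -> 'I_K) : R :=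
  \big[Num.max/0]_(v < V)
    ((\sum_(j < K | j != kv v) phi j v) / phi (kv v) v).

End Defs.

From HB Require Import structures.
From mathcomp Require Import all_boot all_order all_algebra.
From mathcomp Require Import all_classical all_reals all_analysis.
From mathcomp Require Import spectral complex ring lra.
Set Implicit Arguments. Unset Strict Implicit. Unset Printing Implicit Defensive.
Import Order.TTheory GRing.Theory Num.Theory.
Import numFieldNormedType.Exports.
Local Open Scope ring_scope.

(* Conjugating by D = diag(sqrt theta* ) turns R into -1 and Q into -A, where
   A_jk = sqrt(theta_j theta_k) sum_v p_v phi_j(v) phi_k(v) / S_v^2 and
   S_v = sum_k theta_k phi_k(v).  Since rho^2 is invariant under such
   congruences, rho^2 = sqrt(det A) / det((A + 1)/2).  The first-order
   conditions at the interior maximizer, sum_v p_v phi_k(v) / S_v = 1, together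
   with sparsity give 0 <= 1 - A_kk <= C2 eps and 0 <= A_jk <= (2 C1 + C2 eps) eps,
   hence ||A - 1||_F^2 <= eps^2 F(eps) <= eps^2 F(eps0) <= 1/4.  Every eigenvalue
   l of the symmetric matrix A then satisfies (l - 1)^2 <= 1/4, which implies
   exp(-2(l - 1)^2) ((l + 1)/2)^2 <= l; multiplying over the spectrum yields
   rho^2 >= exp(-||A - 1||_F^2) >= exp(-F(eps0) eps^2), i.e. C = sqrt F(eps0). *)

Definition sqdist_1mx (R : pzRingType) n (A : 'M[R]_n) : R :=
  \sum_i \sum_j (A i j - (i == j)%:R) ^+ 2.

Section SymmetricSpectrum.
Variable R : rcfType.
Local Notation RC := (real_complex R).

Lemma symmetric_diagonalizable n (A : 'M[R]_n) : A^T = A ->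
  exists2 P : 'M[R[i]]_n, P \in unitmx &
    exists l : 'I_n -> R,
      map_mx RC A = invmx P *m diag_mx (\row_k (l k)%:C%C) *m P.
Proof.
move=> Asym; set Ac := map_mx RC A.
have Aji i j : A j i = A i j by rewrite -[in RHS]Asym mxE.
have herm : Ac \is hermsymmx.
  apply: realsym_hermsym; last first.
    by apply/mxOverP => i j; rewrite mxE; apply/complex_realP; eexists.
  apply/is_hermitianmxP; rewrite expr0 scale1r.
  by apply/matrixP => i j; rewrite !mxE Aji.
have /orthomx_spectralP E := hermitian_normalmx herm.
have /mxOverP diag_real := hermitian_spectral_diag_real herm.
exists (spectralmx Ac); first exact: spectral_unit.
exists (fun k => complex.Re (spectral_diag Ac 0 k)).
rewrite [LHS]E; congr (_ *m diag_mx _ *m _).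
by apply/rowP => k; rewrite mxE RRe_real // diag_real.
Qed.

Lemma symmetric_eigenvalues n (A : 'M[R]_n) : A^T = A ->
  exists l : 'I_n -> R,
    (forall a b, \det (a *: A + b%:M) = \prod_k (a * l k + b)) /\
    sqdist_1mx A = \sum_k (l k - 1) ^+ 2.
Proof.
move=> Asym; have Aji i j : A j i = A i j by rewrite -[in RHS]Asym mxE.
have [P Pu [l E]] := symmetric_diagonalizable Asym.
pose D (g : R -> R) := diag_mx (\row_k (g (l k))%:C%C : 'rV[R[i]]_n).
have RCI : injective RC by apply: complexI.
have affine a b :
    map_mx RC (a *: A + b%:M) = invmx P *m D (fun x => a * x + b) *m P.
  have -> : D (fun x => a * x + b) = RC a *: D id + (RC b)%:M.
    apply/matrixP => i j; rewrite !mxE.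
    by case: (i == j); rewrite ?mulr1n ?mulr0n ?mulr0 ?addr0 ?rmorphD ?rmorphM.
  rewrite map_mxD map_mxZ map_scalar_mx E mulmxDr mulmxDl.
  rewrite -scalemxAr -scalemxAl.
  by rewrite mul_mx_scalar -scalemxAl mulVmx // scalemx1.
have detD g : \det (D g) = RC (\prod_k g (l k)).
  by rewrite det_diag rmorph_prod; apply: eq_bigr => k _; rewrite mxE.
have trD g : \tr (D g) = RC (\sum_k g (l k)).
  by rewrite mxtrace_diag rmorph_sum; apply: eq_bigr => k _; rewrite mxE.
exists l; split=> [a b|].
  apply: RCI; rewrite -det_map_mx affine !det_mulmx det_inv detD.
  by rewrite mulrAC mulVf ?mul1r // -unitfE -unitmxE.
have A1 : A - 1%:M = 1 *: A + (-1)%:M by rewrite scale1r -scaleN1r scalemx1.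
have sq1 : map_mx RC ((A - 1%:M) *m (A - 1%:M))
            = invmx P *m D (fun x => (x - 1) ^+ 2) *m P.
  rewrite map_mxM A1 affine !mulmxA mulmxK // -[_ *m D _ *m D _]mulmxA mul_diag_mx.
  congr (_ *m _ *m _); apply/matrixP => i j; rewrite !mxE.
  by case: (i == j); rewrite ?mulr1n ?mulr0n ?mulr0 // mul1r -rmorphM expr2.
have trsq : sqdist_1mx A = \tr ((A - 1%:M) *m (A - 1%:M)).
  apply: eq_bigr => i _; rewrite mxE; apply: eq_bigr => j _.
  by rewrite !mxE Aji eq_sym expr2.
apply: RCI; rewrite trsq -trace_map_mx sq1 mxtrace_mulC mulmxA mulmxV //.
by rewrite mul1mx trD.
Qed.
End SymmetricSpectrum.

Section Rho2.
Variable R : realType.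

Lemma expR_sqr_halfD1_le (l : R) : (l - 1) ^+ 2 <= 4^-1 ->
  expR (- (2 * (l - 1) ^+ 2)) * ((l + 1) / 2) ^+ 2 <= l.
Proof.
move=> near1.
have expR_le : expR (- (2 * (l - 1) ^+ 2)) <= (1 + 2 * (l - 1) ^+ 2)^-1.
  rewrite expRN lef_pV2 ?posrE ?expR_gt0 ?expR_ge1Dx //.
  by have := sqr_ge0 (l - 1); lra.
apply: le_trans (ler_wpM2r (sqr_ge0 _) expR_le) _.
have pos : 0 < 1 + 2 * (l - 1) ^+ 2 by have := sqr_ge0 (l - 1); lra.
rewrite mulrC -ler_pdivlMr ?invr_gt0 // invrK.
(* with x = l - 1 the claim is x^2 (7/4 + 2 x) >= 0, and x >= -1/2 *)
have : 0 <= (l - 1) ^+ 2 * (7 / 4 + 2 * (l - 1)) by rewrite mulr_ge0 ?sqr_ge0 //; nra.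
nra.
Qed.

Lemma rho2_1mx_ge n (A : 'M[R]_n) : A^T = A -> sqdist_1mx A <= 4^-1 ->
  expR (- sqdist_1mx A) <= rho2 A 1%:M.
Proof.
move=> Asym small; have [l [detE distE]] := symmetric_eigenvalues Asym.
have near1 k : (l k - 1) ^+ 2 <= 4^-1.
  apply: le_trans small; rewrite distE (bigD1 k) //= lerDl.
  by apply: sumr_ge0 => j _; exact: sqr_ge0.
have l_gt0 k : 0 < l k by have := near1 k; nra.
have detA : \det A = \prod_k l k.
  by rewrite -[A in LHS]scale1r -[_ *: A]addr0 -(raddf0 (@scalar_mx R n)) detE;
    under eq_bigr do rewrite mul1r addr0.
have detB : \det (2^-1 *: (A + 1%:M)) = \prod_k ((l k + 1) / 2).
  rewrite scalerDr scalemx1 detE; apply: eq_bigr => k _.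
  by rewrite mulrDl mul1r mulrC.
have B_gt0 : 0 < \prod_k ((l k + 1) / 2).
  by apply: prodr_gt0 => k _; apply: divr_gt0 => //; rewrite ltr_pwDl ?l_gt0.
have A_ge0 : 0 <= \prod_k l k by apply: prodr_ge0 => k _; exact: ltW.
rewrite /rho2 det1 normr1 sqrtr1 mulr1 detA detB (ger0_norm A_ge0).
rewrite (ger0_norm (ltW B_gt0)).
rewrite ler_pdivlMr // -[X in X <= _]ger0_norm; last first.
  by rewrite mulr_ge0 ?expR_ge0 ?ltW.
rewrite -sqrtr_sqr ler_sqrt //.
rewrite exprMn -expRM_natl mulrN distE mulr_sumr -sumrN expR_sum -prodrXl.
rewrite -big_split /=; apply: ler_prod => k _.
by rewrite mulr_ge0 ?expR_ge0 ?sqr_ge0 // expR_sqr_halfD1_le.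
Qed.

Lemma rho2N n (Q Rm : 'M[R]_n) : rho2 (- Q) (- Rm) = rho2 Q Rm.
Proof.
have normN X : `|\det (- X)| = `|\det X|.
  by rewrite -scaleN1r detZ normrM normrX normrN1 expr1n mul1r.
by rewrite /rho2 -opprD scalerN !normN.
Qed.

Lemma rho2_congr n (M Q Rm : 'M[R]_n) : M \in unitmx ->
  rho2 (M^T *m Q *m M) (M^T *m Rm *m M) = rho2 Q Rm.
Proof.
move=> Mu; set c := `|\det M| ^+ 2.
have c_gt0 : 0 < c by rewrite exprn_gt0 // normr_gt0 -unitfE -unitmxE.
have detC X : `|\det (M^T *m X *m M)| = c * `|\det X|.
  by rewrite !det_mulmx det_tr !normrM mulrAC -expr2.
have sqrtC X : Num.sqrt (c * `|\det X|) = `|\det M| * Num.sqrt `|\det X|.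
  by rewrite sqrtrM ?sqr_ge0 // sqrtr_sqr normr_id.
rewrite /rho2 -mulmxDl -mulmxDr scalemxAl scalemxAr !detC !sqrtC.
rewrite mulrACA -expr2 -/c invfM mulrACA mulfV ?mul1r //.
exact: lt0r_neq0.
Qed.

Definition sqrt_diag K (th : 'I_K -> R) : 'M[R]_K :=
  diag_mx (\row_k Num.sqrt (th k)).

Lemma rho2_Rmat K (th : 'I_K -> R) (Q : 'M[R]_K) : (forall k, 0 < th k) ->
  rho2 Q (Rmat th) = rho2 (- (sqrt_diag th *m Q *m sqrt_diag th)) 1%:M.
Proof.
move=> th_gt0; set S := sqrt_diag th.
have St : S^T = S by rewrite tr_diag_mx.
have Su : S \in unitmx.
  rewrite unitmxE det_diag unitfE; apply/prodf_neq0 => k _.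
  by rewrite mxE sqrtr_eq0 -ltNge.
have SRS : S^T *m Rmat th *m S = - 1%:M.
  apply/matrixP => i j; rewrite St mul_mx_diag mul_diag_mx !mxE.
  case: eqP => [->|_]; rewrite ?mulr1n ?mulr0n ?mulr0 ?mul0r ?oppr0 //.
  by rewrite mulrN mulNr mulrAC -expr2 sqr_sqrtr ?mulfV ?gt_eqF ?ltW.
by rewrite -(rho2_congr Q _ Su) SRS -rho2N opprK St.
Qed.
End Rho2.

Section AffineDerivatives.
Variables (R : realType) (V : nat).

Lemma is_derive_affine (c d x : R) : is_derive x 1 (fun s => c + s * d) d.
Proof.
apply: is_derive_eq (is_deriveD (is_derive_cst c x 1)
  (is_deriveM (is_derive_id x 1) (is_derive_cst d x 1))) _.
by rewrite add0r scaler0 add0r /GRing.scale /= mulr1.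
Qed.

Lemma is_derive_sum_ln_affine (p c d : 'I_V -> R) (x : R) :
  (forall v, 0 < c v + x * d v) ->
  is_derive x 1 (fun s => \sum_v p v * ln (c v + s * d v))
    (\sum_v p v * (d v / (c v + x * d v))).
Proof.
move=> pos; rewrite -fct_sumE; apply: is_derive_sum => v.
have := is_deriveZ (p v)
  (@is_derive1_comp _ (@ln R) (fun s => c v + s * d v) x _ _
    (is_derive1_ln (pos v)) (is_derive_affine (c v) (d v) x)).
by move/is_derive_eq; apply; rewrite mulrC.
Qed.

Lemma is_derive_sum_inv_affine (q c d : 'I_V -> R) (x : R) :
  (forall v, c v + x * d v != 0) ->
  is_derive x 1 (fun t => \sum_v q v / (c v + t * d v))
    (- \sum_v q v * d v / (c v + x * d v) ^+ 2).
Proof.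
move=> nz; rewrite -sumrN -fct_sumE; apply: is_derive_sum => v.
have := is_deriveZ (q v)
  (@is_deriveV _ (fun t => c v + t * d v) x _ _ (nz v) (is_derive_affine _ _ _)).
move/is_derive_eq; apply.
by rewrite /GRing.scale /= mulNr mulrN [_ ^- 2 * _]mulrC mulrA.
Qed.
End AffineDerivatives.

Definition mix (R : realType) (K V : nat) (phi : 'I_K -> 'I_V -> R)
  (th : 'I_K -> R) (v : 'I_V) : R :=
  \sum_k th k * phi k v.

Lemma sumr_indicator_mull (R : pzSemiRingType) (K : nat) (f : 'I_K -> R) (i : 'I_K) :
  \sum_k (k == i)%:R * f k = f i.
Proof.
rewrite (bigD1 i) //= eqxx mul1r big1 ?addr0 // => k /negbTE ->.
by rewrite mul0r.
Qed.

Lemma shift2_opp_in_simplex (R : realType) (K : nat) (th : 'I_K -> R)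
  (k l : 'I_K) (s : R) :
  in_simplex th -> - th k <= s <= th l -> in_simplex (shift2 th k l s (- s)).
Proof.
move=> [th_ge0 th_sum1] /andP[lo hi]; split=> [x|].
  rewrite /shift2; have := th_ge0 x.
  by case: eqVneq => [->|_]; case: eqVneq => [->|_]; rewrite ?mulr1 ?mulr0 ?addr0; lra.
rewrite /shift2 !big_split /= -!mulr_sumr.
have sum1 i : \sum_k (k == i)%:R = 1 :> R.
  by rewrite (bigD1 i) //= eqxx big1 ?addr0 // => y /negbTE ->.
by rewrite !sum1 th_sum1 mulr1 mulNr mulr1 addrK.
Qed.

Section Mixture.
Variables (R : realType) (K V : nat) (p : 'I_V -> R) (phi : 'I_K -> 'I_V -> R)
  (th : 'I_K -> R).
Hypotheses (K_gt0 : (0 < K)%N) (th_gt0 : forall k, 0 < th k)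
  (phi_gt0 : forall k v, 0 < phi k v).

Local Notation S := (mix phi th).

Lemma mix_ge k v : th k * phi k v <= S v.
Proof.
rewrite /mix (bigD1 k) //= lerDl; apply: sumr_ge0 => l _.
by rewrite mulr_ge0 // ltW.
Qed.

Lemma mix_gt0 v : 0 < S v.
Proof.
exact: lt_le_trans (mulr_gt0 (th_gt0 (Ordinal K_gt0)) (phi_gt0 _ v)) (mix_ge _ v).
Qed.

Lemma mix_shift2 i j s t v :
  mix phi (shift2 th i j s t) v = S v + s * phi i v + t * phi j v.
Proof.
rewrite /mix /shift2.
under eq_bigr => k _ do rewrite !mulrDl -!mulrA.
by rewrite !big_split /= -!mulr_sumr !sumr_indicator_mull.
Qed.

Lemma hessH_entry i j :
  hessH p phi th i j = - \sum_v p v * phi i v * phi j v / S v ^+ 2.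
Proof.
rewrite mxE.
pose g t := \sum_v p v * phi i v / (S v + t * phi j v).
have inner : \forall t \near 0,
    derive1 (fun s => Hfun p phi (shift2 th i j s t)) 0 = g t.
  near=> t.
  have pos v : 0 < (S v + t * phi j v) + 0 * phi i v.
    have t_gt : - th j < t by near: t; apply: lt_nbhsr; rewrite oppr_lt0.
    rewrite mul0r addr0; apply: lt_le_trans (_ : (th j + t) * phi j v <= _).
      by rewrite mulr_gt0 //; lra.
    by rewrite mulrDl lerD2r mix_ge.
  have -> : (fun s => Hfun p phi (shift2 th i j s t))
      = fun s => \sum_v p v * ln ((S v + t * phi j v) + s * phi i v).
    apply/funext => s; apply: eq_bigr => v _.
    by rewrite -/(mix _ _ _) mix_shift2 addrAC.
  rewrite derive1E; have [_ ->] := is_derive_sum_ln_affine p pos.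
  by apply: eq_bigr => v _; rewrite mul0r addr0 mulrA.
have nz v : S v + 0 * phi j v != 0 by rewrite mul0r addr0 gt_eqF ?mix_gt0.
rewrite derive1E (near_eq_derive _ inner).
have [_ ->] := is_derive_sum_inv_affine (fun v => p v * phi i v) nz.
by under eq_bigr do rewrite mul0r addr0.
Unshelve. all: by end_near.
Qed.

Section Maximizer.
Hypotheses (th_simplex : in_simplex th) (p_sum1 : \sum_v p v = 1)
  (th_max : forall theta, in_simplex theta -> Hfun p phi theta <= Hfun p phi th).

Lemma Hfun_max_grad_eq k l :
  \sum_v p v * (phi k v / S v) = \sum_v p v * (phi l v / S v).
Proof.
pose m := Num.min (th k) (th l).
have m_gt0 : 0 < m by rewrite lt_min !th_gt0.
have m_le_k : m <= th k by rewrite ge_min lexx.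
have m_le_l : m <= th l by rewrite ge_min lexx orbT.
(* Moving mass s from l to k stays in the simplex while |s| < m, so H restricted
   to that segment is maximal at s = 0. *)
pose f s := Hfun p phi (shift2 th k l s (- s)).
have fE : f = fun s => \sum_v p v * ln (S v + s * (phi k v - phi l v)).
  apply/funext => s; apply: eq_bigr => v _.
  by rewrite -/(mix _ _ _) mix_shift2 mulNr mulrBr addrA.
have pos t : t \in `]- m, m[ -> forall v, 0 < S v + t * (phi k v - phi l v).
  rewrite in_itv => /andP[lo hi] v.
  have := mix_ge k v; have := mix_ge l v; have := phi_gt0 k v; have := phi_gt0 l v.
  case: (leP 0 t) => t0 *.
    have : 0 < (th l - t) * phi l v.
      by rewrite mulr_gt0 // subr_gt0 (lt_le_trans hi).
    nra.
  have : 0 < (th k + t) * phi k v.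
    by rewrite mulr_gt0 // -ltrBlDl sub0r (le_lt_trans _ lo) // lerN2.
  nra.
have m_itv : 0 \in `]- m, m[ by rewrite in_itv /=; lra.
have crit : is_derive (0 : R) (1 : R) f 0.
  apply: (@derive1_at_max _ f (- m) m 0) => //; first lra.
    by move=> t /pos tpos; rewrite fE; case: (is_derive_sum_ln_affine p tpos).
  move=> t; rewrite in_itv => /andP[lo hi].
  have -> : f 0 = Hfun p phi th.
    by rewrite /f oppr0; congr Hfun; apply/funext => x; rewrite /shift2 !mul0r !addr0.
  apply/th_max/shift2_opp_in_simplex => //; apply/andP; split.
    by apply: le_trans (ltW lo); rewrite lerN2.
  exact: le_trans (ltW hi) m_le_l.
have [_ grad0] := crit.
have := is_derive_sum_ln_affine p (pos 0 m_itv); rewrite -fE => -[_].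
rewrite grad0; under eq_bigr do rewrite mul0r addr0 mulrBl mulrBr.
by rewrite sumrB => /eqP; rewrite eq_sym subr_eq0 => /eqP.
Qed.

Lemma Hfun_max_grad1 k : \sum_v p v * (phi k v / S v) = 1.
Proof.
have euler : \sum_l th l * \sum_v p v * (phi l v / S v) = 1.
  under eq_bigr do rewrite mulr_sumr.
  rewrite exchange_big /= -p_sum1; apply: eq_bigr => v _.
  transitivity (p v / S v * S v); last by rewrite divfK ?gt_eqF ?mix_gt0.
  by rewrite /mix mulr_sumr; apply: eq_bigr => l _; rewrite -/(mix _ _ _); ring.
rewrite -euler; under [in RHS]eq_bigr => l _ do rewrite (Hfun_max_grad_eq l k).
by rewrite -mulr_suml th_simplex.2 mul1r.
Qed.
End Maximizer.
End Mixture.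

Section ThetaBounds.
Variables (R : realType) (K : nat) (th : 'I_K -> R).
Hypothesis th_gt0 : forall k, 0 < th k.

Lemma theta_min_le k : theta_min th <= th k.
Proof. exact: bigmin_le. Qed.

Lemma theta_max_ge k : th k <= theta_max th.
Proof. exact: le_bigmax. Qed.

Lemma theta_min_gt0 : 0 < theta_min th.
Proof. by apply: (big_ind (fun x => 0 < x)) => // x y; rewrite lt_min => -> ->. Qed.

Lemma C2max_mul_theta_min_sqr : C2max th * theta_min th ^+ 2 = theta_max th.
Proof. by rewrite divfK // expf_neq0 // gt_eqF // theta_min_gt0. Qed.

Lemma C1max_ge0 : 0 <= C1max th.
Proof.
by rewrite divr_ge0 ?sqrtr_ge0 // mulr_ge0 ?sqrtr_ge0 // ltW // theta_min_gt0.
Qed.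

Lemma C2max_ge0 : 0 <= C2max th.
Proof. by rewrite divr_ge0 ?sqr_ge0 // bigmax_ge_id. Qed.

Lemma Ffun_le (e e' : R) : (0 < K)%N -> 0 <= e <= e' -> Ffun th e <= Ffun th e'.
Proof.
move=> K_gt0 /andP[e_ge0 le_ee'].
have C1_ge0 := C1max_ge0; have C2_ge0 := C2max_ge0.
have K1 : 0 <= K%:R * (K%:R - 1) :> R by rewrite mulr_ge0 ?ler0n // subr_ge0 ler1n.
have coef_ge0 x : 0 <= x -> 0 <= 2 * C1max th + C2max th * x.
  by move=> x_ge0; nra.
rewrite /Ffun lerD2l ler_wpM2l // lerXn2r ?nnegrE ?coef_ge0 ?(le_trans e_ge0) //.
by rewrite lerD2l ler_wpM2l.
Qed.

Lemma sqrt_theta_le_C1max i j :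
  Num.sqrt (th j) <= C1max th * Num.sqrt (th i) ^+ 3.
Proof.
set tm := theta_min th; have tm_gt0 : 0 < tm := theta_min_gt0.
have stm_gt0 : 0 < Num.sqrt tm by rewrite sqrtr_gt0.
have stm3 : tm * Num.sqrt tm = Num.sqrt tm ^+ 3.
  by rewrite -{1}[tm]sqr_sqrtr ?ltW // -exprSr.
apply: le_trans (_ : Num.sqrt (theta_max th) <= _).
  have tM_ge0 : 0 <= theta_max th := le_trans (ltW (th_gt0 j)) (theta_max_ge j).
  by rewrite ler_sqrt // theta_max_ge.
rewrite -[X in X <= _](divfK (_ : tm * Num.sqrt tm != 0)) ?mulf_neq0 ?gt_eqF //.
rewrite -/(C1max th) ler_wpM2l ?C1max_ge0 // stm3 lerXn2r ?nnegrE ?sqrtr_ge0 //.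
by rewrite ler_sqrt ?theta_min_le // ltW.
Qed.
End ThetaBounds.

Lemma convex_comb_in_itv (R : numDomainType) (V : nat) (p x : 'I_V -> R) (M : R) :
  (forall v, 0 <= p v) -> \sum_v p v = 1 -> (forall v, 0 <= x v <= M) ->
  0 <= \sum_v p v * x v <= M.
Proof.
move=> p_ge0 p_sum1 x_itv; apply/andP; split.
  by apply: sumr_ge0 => v _; rewrite mulr_ge0 //; case/andP: (x_itv v).
rewrite -[M]mul1r -p_sum1 mulr_suml; apply: ler_sum => v _.
by rewrite ler_wpM2l //; case/andP: (x_itv v).
Qed.

Definition scaled_hess (R : realType) (K V : nat) (p : 'I_V -> R)
  (phi : 'I_K -> 'I_V -> R) (th : 'I_K -> R) : 'M[R]_K :=
  - (sqrt_diag th *m hessH p phi th *m sqrt_diag th).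

Section SparseBounds.
Variables (R : realType) (K V : nat) (p : 'I_V -> R) (phi : 'I_K -> 'I_V -> R)
  (th : 'I_K -> R) (kv : 'I_V -> 'I_K).
Hypotheses (K_gt0 : (0 < K)%N) (th_gt0 : forall k, 0 < th k)
  (phi_gt0 : forall k v, 0 < phi k v).

Local Notation S := (mix phi th).
Local Notation e := (sparsity phi kv).
Local Notation tm := (theta_min th).
Local Notation tM := (theta_max th).
Local Notation s k := (Num.sqrt (th k)).

Lemma sparsity_ge0 : 0 <= e.
Proof. exact: bigmax_ge_id. Qed.

Lemma sum_le_sparsity v :
  \sum_(j < K | j != kv v) phi j v <= e * phi (kv v) v.
Proof.
rewrite -ler_pdivrMr //.
exact: (le_bigmax 0 (fun v => (\sum_(j < K | j != kv v) phi j v) / phi (kv v) v)).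
Qed.

Lemma le_sparsity v j : j != kv v -> phi j v <= e * phi (kv v) v.
Proof.
move=> j_ne; apply: le_trans (sum_le_sparsity v).
by rewrite (bigD1 j) //= lerDl sumr_ge0 // => l _; exact: ltW.
Qed.

Lemma theta_min_mul_le_mix k v : tm * phi k v <= S v.
Proof.
apply: le_trans (mix_ge th_gt0 phi_gt0 k v).
by rewrite ler_wpM2r ?theta_min_le // ltW.
Qed.

Lemma mix_sub_max_le v :
  S v - th (kv v) * phi (kv v) v <= tM * e * phi (kv v) v.
Proof.
rewrite /mix (bigD1 (kv v)) //= addrAC subrr add0r -mulrA.
apply: le_trans (_ : \sum_(l < K | l != kv v) tM * phi l v <= _).
  by apply: ler_sum => l _; rewrite ler_wpM2r ?theta_max_ge // ltW.
have tM_ge0 : 0 <= tM := le_trans (ltW (th_gt0 (kv v))) (theta_max_ge _ _).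
by rewrite -mulr_sumr ler_wpM2l ?sum_le_sparsity.
Qed.

Lemma diag_term_le i v :
  phi i v * (S v - th i * phi i v) <= C2max th * e * S v ^+ 2.
Proof.
have tm_gt0 := theta_min_gt0 th_gt0; have tm_ge0 := ltW tm_gt0.
have e_ge0 := sparsity_ge0; have S_ge0 := ltW (mix_gt0 K_gt0 th_gt0 phi_gt0 v).
have tM_ge0 : 0 <= tM := le_trans (ltW (th_gt0 i)) (theta_max_ge _ i).
rewrite -(ler_pM2l (exprn_gt0 2 tm_gt0)).
have -> : tm ^+ 2 * (C2max th * e * S v ^+ 2) = tM * e * S v ^+ 2.
  by rewrite -(C2max_mul_theta_min_sqr th_gt0); ring.
set F := phi i v; set D := S v - th i * F.
have F_ge0 : 0 <= F := ltW (phi_gt0 i v).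
have D_ge0 : 0 <= D by rewrite subr_ge0 mix_ge.
have [ki|ki] := eqVneq (kv v) i.
  apply: le_trans (_ : tm ^+ 2 * (F * (tM * e * F)) <= _).
    by rewrite ler_wpM2l ?sqr_ge0 // ler_wpM2l // /D /F -ki mix_sub_max_le.
  have -> : tm ^+ 2 * (F * (tM * e * F)) = tM * e * (tm * F) ^+ 2 by ring.
  rewrite ler_wpM2l ?mulr_ge0 // lerXn2r ?nnegrE ?mulr_ge0 //.
  exact: theta_min_mul_le_mix.
set G := phi (kv v) v.
have G_ge0 : 0 <= G := ltW (phi_gt0 _ v).
have F_le : F <= e * G by apply: le_sparsity; rewrite eq_sym.
have G_le : tm * G <= S v := theta_min_mul_le_mix (kv v) v.
have D_le : D <= S v by rewrite gerBl mulr_ge0 // ltW.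
have tm_le : tm <= tM := le_trans (theta_min_le _ i) (theta_max_ge _ i).
apply: le_trans (_ : tm ^+ 2 * (e * G * S v) <= _).
  by rewrite ler_wpM2l ?sqr_ge0 // ler_pM.
have -> : tm ^+ 2 * (e * G * S v) = tm * e * (tm * G) * S v by ring.
apply: le_trans (_ : tm * e * S v * S v <= _).
  by rewrite ler_wpM2r // ler_wpM2l ?mulr_ge0.
by rewrite expr2 mulrA !ler_wpM2r.
Qed.

Lemma offdiag_term_le_at_max i j v : j != i -> kv v = i ->
  s i * s j * phi i v * phi j v <= C1max th * e * S v ^+ 2.
Proof.
move=> ji ki; have e_ge0 := sparsity_ge0; have C1_ge0 := C1max_ge0 th_gt0.
have si_ge0 : 0 <= s i := sqrtr_ge0 _; have sj_ge0 : 0 <= s j := sqrtr_ge0 _.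
have Fi_ge0 : 0 <= phi i v := ltW (phi_gt0 i v).
have Fj_ge0 : 0 <= phi j v := ltW (phi_gt0 j v).
have S_ge0 := ltW (mix_gt0 K_gt0 th_gt0 phi_gt0 v).
apply: le_trans (_ : s i * (C1max th * s i ^+ 3) * phi i v * (e * phi i v) <= _).
  rewrite ler_pM ?mulr_ge0 ?exprn_ge0 //; last by rewrite -ki le_sparsity // ki.
  by rewrite ler_wpM2r // ler_wpM2l ?sqrt_theta_le_C1max.
have -> : s i * (C1max th * s i ^+ 3) * phi i v * (e * phi i v)
    = C1max th * e * (s i ^+ 2 * phi i v) ^+ 2 by ring.
rewrite ler_wpM2l ?(mulr_ge0 C1_ge0 e_ge0) // lerXn2r ?nnegrE ?mulr_ge0 ?sqr_ge0 //.
by rewrite sqr_sqrtr ?mix_ge // ltW.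
Qed.

Lemma offdiag_term_le_off_max i j v : kv v != i -> kv v != j ->
  s i * s j * phi i v * phi j v <= C2max th * e ^+ 2 * S v ^+ 2.
Proof.
move=> ki kj; have e_ge0 := sparsity_ge0.
have tm_gt0 := theta_min_gt0 th_gt0; have tm_ge0 := ltW tm_gt0.
have tM_ge0 : 0 <= tM := le_trans (ltW (th_gt0 i)) (theta_max_ge _ i).
have S_ge0 := ltW (mix_gt0 K_gt0 th_gt0 phi_gt0 v).
set G := phi (kv v) v; have G_ge0 : 0 <= G := ltW (phi_gt0 _ v).
have F_ge0 k : 0 <= phi k v := ltW (phi_gt0 k v).
have sM k : s k <= Num.sqrt tM by rewrite ler_sqrt // theta_max_ge.
rewrite -(ler_pM2l (exprn_gt0 2 tm_gt0)).
have -> : tm ^+ 2 * (C2max th * e ^+ 2 * S v ^+ 2) = tM * e ^+ 2 * S v ^+ 2.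
  by rewrite -(C2max_mul_theta_min_sqr th_gt0); ring.
apply: le_trans (_ : tm ^+ 2 * (tM * (e * G) * (e * G)) <= _).
  rewrite ler_wpM2l ?sqr_ge0 // -mulrA -[tM * _ * _]mulrA.
  apply: ler_pM; rewrite ?mulr_ge0 ?sqrtr_ge0 //.
    by rewrite -[tM]sqr_sqrtr // expr2 ler_pM ?sqrtr_ge0.
  by apply: ler_pM; rewrite // le_sparsity // eq_sym.
have -> : tm ^+ 2 * (tM * (e * G) * (e * G)) = tM * e ^+ 2 * (tm * G) ^+ 2 by ring.
rewrite ler_wpM2l ?mulr_ge0 ?sqr_ge0 // lerXn2r ?nnegrE ?mulr_ge0 //.
exact: theta_min_mul_le_mix.
Qed.

Lemma offdiag_term_le i j v : i != j ->
  s i * s j * phi i v * phi j v <= (2 * C1max th + C2max th * e) * e * S v ^+ 2.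
Proof.
move=> ij; have e_ge0 := sparsity_ge0.
have C1_ge0 := C1max_ge0 th_gt0; have C2_ge0 := C2max_ge0 th.
have S2_ge0 : 0 <= S v ^+ 2 := sqr_ge0 _.
have C1e : C1max th * e <= (2 * C1max th + C2max th * e) * e by nra.
have C2e : C2max th * e ^+ 2 <= (2 * C1max th + C2max th * e) * e by nra.
have [ki|ki] := eqVneq (kv v) i.
  apply: le_trans (offdiag_term_le_at_max _ ki) (ler_wpM2r S2_ge0 C1e).
  by rewrite eq_sym.
have [kj|kj] := eqVneq (kv v) j.
  rewrite (_ : _ * _ * _ * _ = s j * s i * phi j v * phi i v); last by ring.
  exact: le_trans (offdiag_term_le_at_max ij kj) (ler_wpM2r S2_ge0 C1e).
exact: le_trans (offdiag_term_le_off_max ki kj) (ler_wpM2r S2_ge0 C2e).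
Qed.

Lemma scaled_hessE i j :
  scaled_hess p phi th i j
    = \sum_v p v * (s i * s j * phi i v * phi j v / S v ^+ 2).
Proof.
rewrite /scaled_hess mxE mul_mx_diag mxE mul_diag_mx mxE hessH_entry // !mxE.
rewrite mulrN mulNr opprK.
by rewrite mulr_sumr mulr_suml; apply: eq_bigr => v _; ring.
Qed.

Section Stationary.
Hypotheses (p_ge0 : forall v, 0 <= p v) (p_sum1 : \sum_v p v = 1)
  (grad1 : forall k, \sum_v p v * (phi k v / S v) = 1).

Local Notation A := (scaled_hess p phi th).

Lemma scaled_hess_sym : A^T = A.
Proof.
by apply/matrixP => i j; rewrite mxE !scaled_hessE; apply: eq_bigr => v _; ring.
Qed.

Lemma scaled_hess_diag i : 0 <= 1 - A i i <= C2max th * e.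
Proof.
have S_gt0 v := mix_gt0 K_gt0 th_gt0 phi_gt0 v.
have ss : s i * s i = th i by rewrite -expr2 sqr_sqrtr // ltW.
have -> : 1 - A i i = \sum_v p v * (phi i v * (S v - th i * phi i v) / S v ^+ 2).
  rewrite -{1}(grad1 i) scaled_hessE -sumrB; apply: eq_bigr => v _.
  by rewrite ss; field; rewrite gt_eqF.
apply: convex_comb_in_itv => // v; apply/andP; split.
  by rewrite divr_ge0 ?sqr_ge0 // mulr_ge0 ?subr_ge0 ?mix_ge // ltW.
by rewrite ler_pdivrMr ?exprn_gt0 // diag_term_le.
Qed.

Lemma scaled_hess_offdiag i j : i != j ->
  0 <= A i j <= (2 * C1max th + C2max th * e) * e.
Proof.
move=> ij; rewrite scaled_hessE; apply: convex_comb_in_itv => // v.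
have S_gt0 := mix_gt0 K_gt0 th_gt0 phi_gt0 v.
have F_ge0 k : 0 <= phi k v := ltW (phi_gt0 k v).
apply/andP; split; last by rewrite ler_pdivrMr ?exprn_gt0 // offdiag_term_le.
by rewrite divr_ge0 ?sqr_ge0 // !mulr_ge0 ?sqrtr_ge0.
Qed.

Lemma sqdist_scaled_hess_le : sqdist_1mx A <= e ^+ 2 * Ffun th e.
Proof.
set X := ((2 * C1max th + C2max th * e) * e) ^+ 2.
have row i :
    \sum_j (A i j - (i == j)%:R) ^+ 2 <= (C2max th * e) ^+ 2 + (K%:R - 1) * X.
  rewrite (bigD1 i) //= eqxx; apply: lerD.
    have /andP[lo hi] := scaled_hess_diag i; have hb := le_trans lo hi.
    by rewrite -sqrrN opprB lerXn2r ?nnegrE.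
  apply: le_trans (_ : \sum_(j < K | j != i) X <= _).
    apply: ler_sum => j ji; rewrite eq_sym in ji; rewrite (negbTE ji) subr0.
    have /andP[lo hi] := scaled_hess_offdiag ji; have hb := le_trans lo hi.
    by rewrite lerXn2r ?nnegrE.
  have sumX : \sum_(j < K) X = X + \sum_(j < K | j != i) X by rewrite (bigD1 i).
  rewrite sumr_const card_ord -mulr_natl in sumX.
  by rewrite mulrBl mul1r sumX addrC addKr.
apply: le_trans (_ : \sum_(i < K) ((C2max th * e) ^+ 2 + (K%:R - 1) * X) <= _).
  exact: ler_sum.
rewrite sumr_const card_ord -mulr_natl -subr_ge0.
rewrite (_ : _ - _ = 3%:R * K%:R * (C2max th * e) ^+ 2); last by rewrite /X /Ffun; ring.
by rewrite mulr_ge0 ?sqr_ge0 // mulr_ge0.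
Qed.
End Stationary.
End SparseBounds.

Theorem theorem6 (R : realType) (K : nat) (thetas : 'I_K -> R) (eps0 : R) :
  (3 < K)%N ->
  (forall k, 0 < thetas k) -> in_simplex thetas ->
  0 < eps0 -> eps0 * Num.sqrt (Ffun thetas eps0) = 2%:R^-1 ->
  exists C : R, 0 < C /\
  forall (V : nat) (phi : 'I_K -> 'I_V -> R) (p : 'I_V -> R)
         (kv : 'I_V -> 'I_K),
    (1 <= V)%N ->
    (forall k, in_simplex (phi k)) ->
    (forall k v, 0 < phi k v) ->
    in_simplex p ->
    (forall theta, in_simplex theta -> Hfun p phi theta <= Hfun p phi thetas) ->
    B1 phi kv ->
    sparsity phi kv < eps0 ->
    expR (- (C ^+ 2 * (sparsity phi kv) ^+ 2))
      <= rho2 (hessH p phi thetas) (Rmat thetas).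
Proof.
move=> K_gt3 th_gt0 th_simplex eps0_gt0 eps0_root.
have K_gt0 : (0 < K)%N by apply: leq_trans K_gt3.
set F0 := Ffun thetas eps0.
have F0_gt0 : 0 < F0.
  have : Num.sqrt F0 != 0.
    by apply: contra_eqN eps0_root => /eqP ->; rewrite mulr0 eq_sym invr_eq0 pnatr_eq0.
  by rewrite -sqrtr_gt0 lt_def sqrtr_ge0 andbT.
have F0_ge0 := ltW F0_gt0.
exists (Num.sqrt F0); split; first by rewrite sqrtr_gt0.
move=> V phi p kv _ _ phi_gt0 [p_ge0 p_sum1] th_max _ e_lt; set e := sparsity phi kv.
have e_ge0 : 0 <= e := sparsity_ge0 phi kv.
have grad1 := Hfun_max_grad1 K_gt0 th_gt0 phi_gt0 th_simplex p_sum1 th_max.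
have dist_le : sqdist_1mx (scaled_hess p phi thetas) <= e ^+ 2 * F0.
  apply: le_trans (sqdist_scaled_hess_le kv K_gt0 th_gt0 phi_gt0 p_ge0 p_sum1 grad1) _.
  by rewrite ler_wpM2l ?sqr_ge0 // Ffun_le // e_ge0 (ltW e_lt).
have dist_small : e ^+ 2 * F0 <= 4^-1.
  rewrite -[4^-1](_ : (eps0 * Num.sqrt F0) ^+ 2 = _); last by rewrite eps0_root; lra.
  by rewrite exprMn sqr_sqrtr // ler_wpM2r // lerXn2r ?nnegrE // ltW.
apply: le_trans (_ : expR (- sqdist_1mx (scaled_hess p phi thetas)) <= _).
  by rewrite ler_expR lerN2 sqr_sqrtr // mulrC.
rewrite rho2_Rmat //.
exact: rho2_1mx_ge (scaled_hess_sym p K_gt0 th_gt0 phi_gt0)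
  (le_trans dist_le dist_small).
Qed.
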